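(* Let $(X,\leq)$ be a poset and $\mathbb{F}_2$ the field with two elements. If the group of units $\mathcal{U}(FI(X,\mathbb{F}_2))$ is solvable, then its derived length is ${\rm dl}(\mathcal{U}(FI(X,\mathbb{F}_2)))=\lceil\log_2(l(X)+1)\rceil$.
   Context: $FI(X,K)$ is the finitary incidence algebra: the $K$-vector space of formal sums $\alpha=\sum_{x\leq y}\alpha_{xy}e_{xy}$ ($x,y\in X$, $\alpha_{xy}\in K$) such that for every pair $x<y$ only finitely many $x\leq u<v\leq y$ have $\alpha_{uv}\neq0$, with convolution product $\alpha\beta=\sum_{x\leq y}\big(\sum_{x\leq z\leq y}\alpha_{xz}\beta_{zy}\big)e_{xy}$. The length $l(X)$ is the supremum of $|C|-1$ over finite chains $C\subseteq X$. ${\rm dl}$ denotes derived length of a solvable group; $\lceil t\rceil$ is the ceiling. *)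

From HB Require Import structures.
From mathcomp Require Import all_boot all_order all_algebra.
From mathcomp Require Import boolp classical_sets cardinality fsbigop.
Set Implicit Arguments. Unset Strict Implicit. Unset Printing Implicit Defensive.
Import Order.TTheory GRing.Theory.
Local Open Scope classical_set_scope.
Local Open Scope ring_scope.

Section FI.
Variables (d : Order.disp_t) (X : porderType d).

(* formal sums  alpha = sum_{x<=y} alpha_xy e_xy  over F_2, as coefficient functions *)
Definition FIel := X -> X -> 'F_2.

Definition inFI (a : FIel) : Prop :=
  (forall x y, a x y != 0 -> (x <= y)%O) /\
  (forall x y, (x < y)%O ->
     finite_set [set p : X * X | [/\ (x <= p.1)%O, (p.1 < p.2)%O, (p.2 <= y)%O
                                   & a p.1 p.2 != 0]]).

Definition FImul (a b : FIel) : FIel := fun x y =>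
  if (x <= y)%O then \sum_(z \in [set z : X | (x <= z)%O && (z <= y)%O]) (a x z * b z y)
  else 0.

Definition FIone : FIel := fun x y => (x == y)%:R.

Definition FIunits : set FIel :=
  [set a | inFI a /\ exists b, inFI b /\ FImul a b = FIone /\ FImul b a = FIone].

Definition FIcomms (H : set FIel) : set FIel :=
  [set c | exists a b a' b', H a /\ H b /\ inFI a' /\ inFI b' /\
       FImul a a' = FIone /\ FImul a' a = FIone /\
       FImul b b' = FIone /\ FImul b' b = FIone /\
       c = FImul (FImul (FImul a' b') a) b].

Definition FIgen (G : set FIel) : set FIel :=
  [set g | forall S : set FIel,
      S FIone -> G `<=` S ->
      (forall u v, S u -> S v -> S (FImul u v)) ->
      (forall u v, S u -> inFI v -> FImul u v = FIone -> FImul v u = FIone -> S v) ->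
      S g].

Definition FIderived (H : set FIel) : set FIel := FIgen (FIcomms H).

Fixpoint FIdser (n : nat) : set FIel :=
  match n with 0 => FIunits | n.+1 => FIderived (FIdser n) end.

Definition FIunits_solvable : Prop := exists n, FIdser n = [set FIone].

Definition FIunits_dl_is (k : nat) : Prop :=
  FIdser k = [set FIone] /\ forall m, (m < k)%N -> FIdser m <> [set FIone].

End FI.

Definition is_chain (d : Order.disp_t) (X : porderType d) (s : seq X) : Prop :=
  uniq s /\ forall x y, x \in s -> y \in s -> (x <= y)%O || (y <= x)%O.

(* l(X) = l : the supremum of |C|-1 over finite chains C is the natural number l
   (|C|-1 truncated at 0, so l(empty poset) = 0) *)
Definition poset_length_is (d : Order.disp_t) (X : porderType d) (l : nat) : Prop :=
  (exists s : seq X, is_chain s /\ (size s).-1 = l) /\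
  (forall s : seq X, is_chain s -> ((size s).-1 <= l)%N).

From mathcomp Require Import all_boot all_order all_algebra.
From mathcomp Require Import boolp classical_sets cardinality fsbigop.
From mathcomp Require Import ring.
Import Order.TTheory GRing.Theory.

(* Let 1 + J^n be the set of u with unit diagonal whose off-diagonal support consists of
   pairs x < y joined by a strict chain of n steps.  Over F_2 every unit has diagonal 1,
   so U is contained in 1 + J^1.  At a pair not joined by a chain of 2n steps, a product of
   elements of 1 + J^n is the sum of their off-diagonal parts, so commutators of 1 + J^n
   lie in 1 + J^(2n) and the k-th derived subgroup lies in 1 + J^(2^k).  Conversely, over
   F_2, [1 + e_xz, 1 + e_zy] = 1 + e_xy, so 1 + e_xy lies in the k-th derived subgroup
   whenever x and y are joined by a chain of 2^k steps.  Hence the k-th derived subgroup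
   is trivial exactly when l(X) < 2^k: solvability bounds l(X), and the least such k is
   ceil(log2 (l(X) + 1)). *)

Set Implicit Arguments.
Unset Strict Implicit.
Unset Printing Implicit Defensive.

Section StrictChains.
Variables (d : Order.disp_t) (X : porderType d).

Definition ltchain (n : nat) (x y : X) : Prop :=
  exists s : seq X, [/\ size s = n, path <%O x s & last x s = y].

Lemma ltchain1 (x y : X) : (x < y)%O -> ltchain 1 x y.
Proof. by move=> xy; exists [:: y]; rewrite /= xy. Qed.

Lemma ltchain_cat n m (x z y : X) :
  ltchain n x z -> ltchain m z y -> ltchain (n + m) x y.
Proof.
move=> [s1 [<- p1 <-]] [s2 [<- p2 <-]]; exists (s1 ++ s2).
by rewrite size_cat cat_path last_cat p1 p2.
Qed.

Lemma ltchain_split n m (x y : X) :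
  ltchain (n + m) x y -> exists z, ltchain n x z /\ ltchain m z y.
Proof.
move=> [s [sz ps <-]]; exists (last x (take n s)); split.
  by exists (take n s); rewrite size_takel ?sz ?leq_addr // take_path.
exists (drop n s); rewrite size_drop sz addKn -last_cat cat_take_drop.
by move: ps; rewrite -{1}(cat_take_drop n s) cat_path => /andP[].
Qed.

Lemma ltchain_lt n (x y : X) : (0 < n)%N -> ltchain n x y -> (x < y)%O.
Proof.
move=> n0 [s [sz ps <-]]; case/lastP: s sz ps => [sz|s z _]; first by rewrite -sz in n0.
rewrite last_rcons => /(order_path_min lt_trans)/allP; apply.
by rewrite mem_rcons mem_head.
Qed.

Lemma ltchain_le_trans n (x z y : X) :
  (0 < n)%N -> ltchain n x z -> (z <= y)%O -> ltchain n x y.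
Proof.
move=> n0 [s [sz ps <-]] zy; case/lastP: s sz ps zy => [sz|s w]; first by rewrite -sz in n0.
rewrite size_rcons rcons_path last_rcons => sz /andP[ps lt_w] wy.
exists (rcons s y); rewrite size_rcons rcons_path last_rcons ps.
by rewrite (lt_le_trans lt_w wy).
Qed.

Lemma ltchain_is_chain n (x y : X) :
  ltchain n x y -> exists s : seq X, is_chain s /\ size s = n.+1.
Proof.
move=> [s [sz ps _]]; exists (x :: s); split; last by rewrite /= sz.
have sorted_lt : sorted <%O (x :: s) by [].
have /andP[_ sorted_le] := lt_sorted_is_uniq_le sorted_lt.
split=> [|a b ain bin]; first exact: lt_sorted_uniq.
case: (leqP (index a (x :: s)) (index b (x :: s))) => [ab|/ltnW ba].
  by rewrite (sorted_leq_index le_trans lexx sorted_le a b ain bin ab).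
by rewrite (sorted_leq_index le_trans lexx sorted_le b a bin ain ba) orbT.
Qed.

Lemma is_chain_ltchain (s : seq X) k :
  is_chain s -> (k < size s)%N -> exists x y, ltchain k x y.
Proof.
move=> [us cs] ks.
have tot : {in s &, total <=%O} by move=> a b ain bin; exact: cs.
have sorted_lt : sorted <%O (sort <=%O s).
  by rewrite lt_sorted_uniq_le sort_uniq us (sort_sorted_in tot (allss s)).
move: sorted_lt ks; rewrite -(size_sort <=%O); case: (sort _ s) => [//|x t] /= pt kt.
exists x, (last x (take k t)), (take k t).
by rewrite size_takel ?take_path // -ltnS.
Qed.

End StrictChains.

Local Open Scope classical_set_scope.
Local Open Scope ring_scope.

Lemma F2_neq0 (c : 'F_2) : c != 0 -> c = 1.
Proof. by case: c => [[|[|//]]] //= Hc _; apply/val_inj. Qed.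

Lemma F2_addrr (c : 'F_2) : c + c = 0.
Proof. exact/addrr_pchar2/pchar_Fp. Qed.

Section FsbigFewTerms.
Variables (T : choiceType) (R : nmodType) (A : set T) (F : T -> R).

Lemma fsbig_single w : A w -> (forall z, A z -> z != w -> F z = 0) ->
  \sum_(z \in A) F z = F w.
Proof.
move=> Aw F0; rewrite -(fsbig_widen [set w]) ?fsbig_set1 => [//|z ->//|z [Az /eqP]].
exact: F0.
Qed.

Lemma fsbig_pair w1 w2 : w1 != w2 -> A w1 -> A w2 ->
  (forall z, A z -> z != w1 -> z != w2 -> F z = 0) ->
  \sum_(z \in A) F z = F w1 + F w2.
Proof.
move=> w12 Aw1 Aw2 F0; rewrite -(fsbig_widen ([set w1] `|` [set w2])).
- rewrite fsbigU0 ?fsbig_set1 //; try exact: finite_set1.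
  by move=> z [/= -> /eqP]; rewrite (negbTE w12).
- by move=> z [->|->].
- by move=> z [Az /not_orP[/eqP z1 /eqP z2]]; exact: F0.
Qed.

End FsbigFewTerms.

Section Transvections.
Variables (d : Order.disp_t) (X : porderType d).
Local Notation one := (@FIone d X).

Definition supp_le (u : FIel X) : Prop := forall x y, u x y != 0 -> (x <= y)%O.

Definition transvection (p q : X) : FIel X :=
  fun x y => (x == y)%:R + ((x == p) && (y == q))%:R.

Lemma supp_le1 : supp_le one.
Proof. by move=> x y; rewrite /FIone; case: (x =P y) => [->|]; rewrite ?lexx ?eqxx. Qed.

Lemma supp_le_FImul (u v : FIel X) : supp_le (FImul u v).
Proof. by move=> x y; rewrite /FImul; case: ifP; rewrite ?eqxx. Qed.

Lemma supp_le_transvection (p q : X) : (p < q)%O -> supp_le (transvection p q).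
Proof.
move=> pq x y; rewrite /transvection; case: (x =P y) => [->|_]; first by rewrite lexx.
by rewrite add0r; case: (x =P p) => [->|//]; case: (y =P q) => [-> _|//]; exact: ltW.
Qed.

Lemma inFI1 : inFI one.
Proof.
split=> [|x y _]; first exact: supp_le1.
apply: sub_finite_set (finite_set0 _) => -[x' y'] [/= _ /lt_eqF xy' _].
by rewrite /FIone xy' eqxx.
Qed.

Lemma inFI_transvection (p q : X) : (p < q)%O -> inFI (transvection p q).
Proof.
move=> pq; split=> [|x y _]; first exact: supp_le_transvection.
apply: sub_finite_set (finite_set1 (p, q)) => -[x' y'] [/= _ /lt_eqF xy' _].
by rewrite /transvection xy' add0r; case: (x' =P p) => [->|]; case: (y' =P q) => [->|].
Qed.

Lemma transvection_neq1 (p q : X) : (p < q)%O -> transvection p q <> one.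
Proof.
move=> /lt_eqF pq /(congr1 (fun u => u p q)) /eqP.
by rewrite /transvection /FIone pq !eqxx add0r oner_eq0.
Qed.

Lemma FImul_diag (u v : FIel X) x : FImul u v x x = u x x * v x x.
Proof.
rewrite /FImul lexx (fsbig_single (w := x)) /= ?lexx // => z /andP[xz zx].
by rewrite eq_le xz zx.
Qed.

Lemma FImulr1 (u : FIel X) : supp_le u -> FImul u one = u.
Proof.
move=> u_le; apply/funext => x; apply/funext => y; rewrite /FImul.
case: ifP => [xy|/negbT xy]; last by apply/esym/eqP; apply: contraNT xy; exact: u_le.
rewrite (fsbig_single (w := y)) /= ?xy ?lexx //; first by rewrite /FIone eqxx mulr1.
by move=> z _ /negbTE zy; rewrite /FIone zy mulr0.
Qed.

Lemma FImul_transvection (u : FIel X) (p q : X) : supp_le u -> (p < q)%O ->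
  FImul u (transvection p q) = fun x y => u x y + (y == q)%:R * u x p.
Proof.
move=> u_le pq; apply/funext => x; apply/funext => y; rewrite /FImul /transvection.
have qp : (q == p) = false by rewrite eq_sym (lt_eqF pq).
have u0 z : ~~ (x <= z)%O -> u x z = 0.
  by move=> xz; apply/eqP; apply: contraNT xz; exact: u_le.
case: ifP => [xy|/negbT xy]; last first.
  rewrite (u0 y xy); case: (y =P q) => [yq|]; last by rewrite mul0r addr0.
  by rewrite u0 ?mulr0 ?addr0 //; apply: contraNN xy => xp; rewrite yq (le_trans xp (ltW pq)).
case: (y =P q) xy => [-> xq|/eqP yq xy].
  case: (boolP (x <= p)%O) => xp.
    rewrite (fsbig_pair (w1 := q) (w2 := p)) /= ?qp ?xp ?xq ?lexx ?(ltW pq) //=.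
      by rewrite !eqxx (lt_eqF pq) addr0 add0r !mulr1 mul1r.
    by move=> z _ /negbTE -> /negbTE ->; rewrite addr0 mulr0.
  rewrite (u0 p xp) (fsbig_single (w := q)) /= ?eqxx ?qp ?xq ?lexx //=.
    by rewrite addr0 mulr1 mulr0 addr0.
  move=> z /andP[xz _] /negbTE ->; rewrite add0r.
  by case: (z =P p) => [zp|_]; [rewrite -zp xz in xp | rewrite mulr0].
rewrite (fsbig_single (w := y)) /= ?eqxx ?(negbTE yq) ?andbF ?xy ?lexx //.
  by rewrite !addr0 mulr1 mul0r addr0.
by move=> z _ /negbTE ->; rewrite andbF addr0 mulr0.
Qed.

Lemma transvection_sqr1 (p q : X) : (p < q)%O ->
  FImul (transvection p q) (transvection p q) = one.
Proof.
move=> pq; rewrite (FImul_transvection (supp_le_transvection pq) pq).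
apply/funext => x; apply/funext => y; rewrite /transvection /FIone (lt_eqF pq) andbF addr0.
by case: (y =P q) => _; rewrite ?andbT ?andbF ?mul1r ?mul0r ?addr0 // -addrA F2_addrr addr0.
Qed.

(* Transvections are involutions over F_2, so the left-hand side is the commutator of
   [1 + e_pr] and [1 + e_rq]. *)
Lemma transvection_comm (p r q : X) : (p < r)%O -> (r < q)%O ->
  FImul (FImul (FImul (transvection p r) (transvection r q)) (transvection p r))
        (transvection r q) = transvection p q.
Proof.
move=> pr rq; have pq := lt_trans pr rq.
have spr := supp_le_transvection pr.
rewrite (FImul_transvection (@supp_le_FImul _ _) rq).
rewrite (FImul_transvection (@supp_le_FImul _ _) pr) (FImul_transvection spr rq).
apply/funext => x; apply/funext => y; rewrite /transvection.
rewrite (lt_eqF pr) (lt_eqF rq) (lt_eqF pq) eqxx andbT.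
by case: (x == y); case: (x == p); case: (x == r); case: (y == q); case: (y == r);
  apply/eqP.
Qed.

End Transvections.

Section Congruence.
Variables (d : Order.disp_t) (X : porderType d) (n : nat).
Hypothesis n_gt0 : (0 < n)%N.
Local Notation one := (@FIone d X).

(* [congr1J n u] says that [u] lies in [1 + J^n]. *)
Definition congr1J (u : FIel X) : Prop :=
  (forall x, u x x = 1) /\ (forall x y : X, x != y -> u x y != 0 -> ltchain n x y).

Lemma congr1J1 : congr1J one.
Proof. by split=> [x|x y /negbTE]; rewrite /FIone ?eqxx // => ->; rewrite eqxx. Qed.

Lemma congr1J_eq1 (u : FIel X) : (forall x y : X, ~ ltchain n x y) -> congr1J u -> u = one.
Proof.
move=> no_chain [u1 u_chain]; apply/funext => x; apply/funext => y; rewrite /FIone.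
case: (eqVneq x y) => [->|xy]; first by rewrite u1.
by apply/eqP; apply: contraT => /(u_chain _ _ xy) /no_chain.
Qed.

Lemma congr1J_vanish (u : FIel X) x z y : congr1J u -> x != z -> (z <= y)%O ->
  ~ ltchain n x y -> u x z = 0.
Proof.
move=> [_ u_chain] xz zy no_xy; apply/eqP; apply: contraT => /(u_chain _ _ xz) xz_chain.
by case: (no_xy (ltchain_le_trans n_gt0 xz_chain zy)).
Qed.

Lemma congr1J_mul (u v : FIel X) : congr1J u -> congr1J v -> congr1J (FImul u v).
Proof.
move=> Ju [v1 v_chain]; split=> [x|x y xy]; first by rewrite FImul_diag Ju.1 v1 mulr1.
apply: contra_neqP => no_xy; rewrite /FImul; case: ifP => // _.
apply: fsbig1 => z /andP[_ zy]; case: (eqVneq x z) => [<-|xz].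
  by rewrite Ju.1 mul1r; apply/eqP; apply: contraT => /(v_chain _ _ xy) /no_xy.
by rewrite (congr1J_vanish Ju xz zy no_xy) mul0r.
Qed.

Lemma congr1J_inv (u v : FIel X) :
  congr1J u -> supp_le v -> FImul u v = one -> congr1J v.
Proof.
move=> Ju v_le uv; split=> [x|x y xy].
  by have := congr1 (fun w => w x x) uv; rewrite /= FImul_diag Ju.1 mul1r /FIone eqxx.
move=> /[dup] /v_le x_le_y; apply: contra_neqP => no_xy.
have := congr1 (fun w => w x y) uv; rewrite /= /FIone (negbTE xy) /FImul x_le_y.
rewrite (fsbig_single (w := x)) /= ?lexx ?x_le_y ?Ju.1 ?mul1r // => z /andP[_ zy] zx.
by rewrite (congr1J_vanish Ju _ zy no_xy) ?mul0r // eq_sym.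
Qed.

Lemma FImul_congr1J (u v : FIel X) x y : congr1J u -> congr1J v -> x != y ->
  ~ ltchain (n + n) x y -> FImul u v x y = u x y + v x y.
Proof.
move=> Ju Jv xy no_xy; rewrite /FImul; case: ifP => [x_le_y|/negbT x_nle_y]; last first.
  have no_n : ~ ltchain n x y by move/(ltchain_lt n_gt0)/ltW; apply/negP.
  by rewrite !(congr1J_vanish _ xy (lexx y) no_n) ?addr0.
rewrite (fsbig_pair (w1 := x) (w2 := y)) /= ?lexx ?x_le_y ?Ju.1 ?Jv.1 ?mul1r ?mulr1 1?addrC //.
move=> z _ zx zy; case: (eqVneq (u x z) 0) => [->|uxz]; first by rewrite mul0r.
case: (eqVneq (v z y) 0) => [->|vzy]; first by rewrite mulr0.
by case: no_xy; apply: ltchain_cat (Ju.2 _ _ _ uxz) (Jv.2 _ _ zy vzy); rewrite eq_sym.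
Qed.

End Congruence.

(* Modulo [J^(2n)] products in [1 + J^n] are sums of off-diagonal parts, and those of
   mutually inverse elements cancel. *)
Lemma congr1J_comm d (X : porderType d) n (a b a' b' : FIel X) : (0 < n)%N ->
  congr1J n a -> congr1J n b -> supp_le a' -> supp_le b' ->
  FImul a a' = @FIone _ X -> FImul b b' = @FIone _ X ->
  congr1J (n + n) (FImul (FImul (FImul a' b') a) b).
Proof.
move=> n_gt0 Ja Jb a'_le b'_le aa' bb'.
have Ja' := congr1J_inv n_gt0 Ja a'_le aa'; have Jb' := congr1J_inv n_gt0 Jb b'_le bb'.
have Ja'b' := congr1J_mul n_gt0 Ja' Jb'; have Ja'b'a := congr1J_mul n_gt0 Ja'b' Ja.
split=> [x|x y xy]; first by have [-> _] := congr1J_mul n_gt0 Ja'b'a Jb.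
apply: contra_neqP => no_xy; have FImulD := FImul_congr1J n_gt0 _ _ xy no_xy.
have := congr1 (fun w => w x y) aa'; have := congr1 (fun w => w x y) bb'.
rewrite /= !FImulD // /FIone (negbTE xy) => bb'0 aa'0.
suff -> : a' x y + b' x y + a x y + b x y = (a x y + a' x y) + (b x y + b' x y).
  by rewrite aa'0 bb'0 addr0.
by ring.
Qed.

Section DerivedSeries.
Variables (d : Order.disp_t) (X : porderType d).
Local Notation one := (@FIone d X).
Local Notation dser := (@FIdser d X).
Local Notation units := (@FIunits d X).

Lemma FIdser1 k : dser k one.
Proof.
case: k => [|k S S1 //]; split; first exact: inFI1.
exists one; split; first exact: inFI1.
by rewrite FImulr1 //; exact: supp_le1.
Qed.

Lemma FIunits_congr1J : units `<=` congr1J 1.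
Proof.
move=> u [[u_le _] [v [_ [uv _]]]]; split=> [x|x y xy uxy].
  apply: F2_neq0; apply: contra_eq_neq (congr1 (fun w => w x x) uv) => /= ux0.
  by rewrite FImul_diag ux0 mul0r /FIone eqxx eq_sym oner_neq0.
by apply: ltchain1; rewrite lt_neqAle xy u_le.
Qed.

Lemma FIdser_congr1J k : dser k `<=` congr1J (2 ^ k).
Proof.
elim: k => [|k IH]; first exact: FIunits_congr1J.
have k_gt0 : (0 < 2 ^ k)%N by rewrite expn_gt0.
have kk_gt0 : (0 < 2 ^ k + 2 ^ k)%N by rewrite addn_gt0 k_gt0.
move=> u; apply; rewrite expnS mul2n -addnn.
- exact: congr1J1.
- move=> c [a [b [a' [b' [/IH Ja [/IH Jb [[a'_le _] [[b'_le _] [aa' [_ [bb' [_ ->]]]]]]]]]]]].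
  exact: congr1J_comm.
- by move=> v w; exact: congr1J_mul.
- by move=> v w Jv [w_le _] vw _; exact: congr1J_inv w_le vw.
Qed.

Lemma transvection_FIunits (x y : X) : (x < y)%O -> units (transvection x y).
Proof.
move=> xy; split; first exact: inFI_transvection.
by exists (transvection x y); rewrite transvection_sqr1 //; split=> //; exact: inFI_transvection.
Qed.

Lemma transvection_FIdser k (x y : X) : ltchain (2 ^ k) x y -> dser k (transvection x y).
Proof.
elim: k x y => [|k IH] x y; first by move/(ltchain_lt (expn_gt0 2 0)); exact: transvection_FIunits.
rewrite expnS mul2n -addnn => /ltchain_split [z [xz zy]] S _ S_comms _ _.
have k_gt0 : (0 < 2 ^ k)%N by rewrite expn_gt0.
have [lt_xz lt_zy] := (ltchain_lt k_gt0 xz, ltchain_lt k_gt0 zy).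
apply: S_comms; rewrite -(transvection_comm lt_xz lt_zy).
exists (transvection x z), (transvection z y), (transvection x z), (transvection z y).
have [I_xz I_zy] := (inFI_transvection lt_xz, inFI_transvection lt_zy).
rewrite !transvection_sqr1 //; split; first exact: IH.
by split; first exact: IH.
Qed.

Lemma FIdser_neq1 k (s : seq X) : is_chain s -> (2 ^ k < size s)%N -> dser k <> [set one].
Proof.
move=> s_chain /(is_chain_ltchain s_chain) [x [y xy]] dser_eq1.
have := transvection_FIdser xy; rewrite dser_eq1 /=.
by apply: transvection_neq1; apply: ltchain_lt xy; rewrite expn_gt0.
Qed.

Lemma FIdser_eq1 k l : poset_length_is X l -> (l < 2 ^ k)%N -> dser k = [set one].
Proof.
move=> [_ chain_le] l_lt; apply/seteqP; split=> [u /FIdser_congr1J Ju|_ ->]; last first.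
  exact: FIdser1.
apply: congr1J_eq1 Ju => x y /ltchain_is_chain [s [s_chain s_size]].
by have := leq_ltn_trans (chain_le s s_chain) l_lt; rewrite s_size ltnn.
Qed.

End DerivedSeries.

Lemma ltn_exp_up_log p m n : (1 < p)%N -> (m < up_log p n)%N -> (p ^ m < n)%N.
Proof.
move=> p_gt1 m_lt; have up_gt0 := leq_ltn_trans (leq0n m) m_lt.
have /andP[_ n_gt1] : (1 < p)%N && (1 < n)%N by rewrite -up_log_gt0.
apply: leq_ltn_trans (up_log_gtn p_gt1 n_gt1).
by rewrite leq_exp2l // -ltnS prednK.
Qed.

Lemma poset_length_exists d (X : porderType d) N :
  (forall s : seq X, is_chain s -> (size s <= N)%N) -> exists l, poset_length_is X l.
Proof.
move=> chain_le.
pose is_length j := `[< exists s : seq X, is_chain s /\ (size s).-1 = j >].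
have length0 : exists j, is_length j by exists 0%N; apply/asboolP; exists [::].
have length_le j : is_length j -> (j <= N)%N.
  by move=> /asboolP [s [s_chain <-]]; rewrite (leq_trans (leq_pred _)) ?chain_le.
have [l /asboolP l_length l_max] := ex_maxnP length0 length_le.
by exists l; split=> // s s_chain; apply: l_max; apply/asboolP; exists s.
Qed.

Theorem corollary1p8 (d : Order.disp_t) (X : porderType d) :
  FIunits_solvable X ->
  exists l : nat, poset_length_is X l /\ FIunits_dl_is X (up_log 2 l.+1).
Proof.
move=> [n dser_n].
have chain_le (s : seq X) : is_chain s -> (size s <= 2 ^ n)%N.
  by move=> s_chain; rewrite leqNgt; apply/negP => /(FIdser_neq1 s_chain).
have [l l_length] := poset_length_exists chain_le.
exists l; split=> //; split=> [|m m_lt].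
  by apply: FIdser_eq1 l_length _; exact: up_logP.
have [[s [s_chain s_size]] _] := l_length; apply: (FIdser_neq1 (k := m) s_chain).
have := ltn_exp_up_log (isT : (1 < 2)%N) m_lt.
by rewrite -s_size; case: (size s) => [|k] //=; rewrite ltnNge expn_gt0.
Qed.
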